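(* Let $M$ be a $4$-dimensional Riemannian manifold with metric $g$ and affinor structure $q$ (a $(1,1)$-tensor field) whose components in local coordinates $(x^1,x^2,x^3,x^4)$ are $$g_{ij}=\begin{pmatrix} A & B & C & B\\ B & A & B & C\\ C & B & A & B\\ B & C & B & A\end{pmatrix},\qquad q_i^{\ j}=\begin{pmatrix} 0&1&0&0\\0&0&1&0\\0&0&0&1\\1&0&0&0\end{pmatrix},$$ where $A,B,C$ are smooth functions with $0<B<C<A$, and suppose $q$ is parallel, i.e. $\nabla q=0$ where $\nabla$ is the Levi-Civita connection of $g$. Let $p\in M$ and let $x=(x^1,x^2,x^3,x^4)\in T_pM$ satisfy $((x^1-x^3)^2+(x^2-x^4)^2)(x^1-x^2+x^3-x^4)(x^1+x^2+x^3+x^4)\neq 0$ (so that $x,qx,q^2x,q^3x$ are linearly independent). Then the sectional curvatures of the $2$-planes $E_1=\{x,qx\}$, $E_3=\{q^3x,x\}$, $E_4=\{q^2x,qx\}$, $E_6=\{q^2x,q^3x\}$ are all equal, and the sectional curvatures of the $2$-planes $E_2=\{x,q^2x\}$ and $E_5=\{q^3x,qx\}$ are zero.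
   Context: $R$ denotes the Riemann curvature tensor of $\nabla$, $R(x,y)z=\nabla_x\nabla_yz-\nabla_y\nabla_xz-\nabla_{[x,y]}z$, with associated $(0,4)$-tensor $R(x,y,z,u)=g(R(x,y)z,u)$. The sectional curvature of the $2$-plane spanned by linearly independent $x,y\in T_pM$ is $\mu(\{x,y\};p)=\dfrac{R(x,y,x,y)}{g(x,x)g(y,y)-g(x,y)^2}$. The structure satisfies $q^4=\mathrm{id}$ and $g(qx,qy)=g(x,y)$. *)

(* Local-coordinate model of the paper's
   setting: the manifold is (a chart domain) U, an open subset of R^4,
   points and tangent vectors are row vectors 'rV[R]_4. *)
From HB Require Import structures.
From mathcomp Require Import all_boot all_order all_algebra.
From mathcomp Require Import all_classical all_reals all_analysis.
Set Implicit Arguments. Unset Strict Implicit. Unset Printing Implicit Defensive.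
Import Order.TTheory GRing.Theory Num.Theory.
Import numFieldNormedType.Exports.
Local Open Scope classical_set_scope.
Local Open Scope ring_scope.

Section Geom.
Variable R : realType.
Local Notation V := 'rV[R]_4.

Definition ebasis (i : 'I_4) : V := delta_mx 0 i.

Definition pd (i : 'I_4) (f : V -> R) : V -> R := fun p => 'D_(ebasis i) f p.

Definition ipd (s : seq 'I_4) (f : V -> R) : V -> R := foldr pd f s.

Definition smooth_on (U : set V) (f : V -> R) : Prop :=
  forall (s : seq 'I_4) (p : V), U p ->
    {for p, continuous (ipd s f)} /\
    (forall i : 'I_4, derivable (ipd s f) p (ebasis i)).

Definition gmat (A B C : V -> R) (p : V) : 'M[R]_4 :=
  \matrix_(i < 4, j < 4)
    (let d := ((val j + 4 - val i) %% 4)%N in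
     if d == 0%N then A p else if d == 2%N then C p else B p).

Definition gfun (A B C : V -> R) (i j : 'I_4) : V -> R :=
  fun p => gmat A B C p i j.

Definition ginv (A B C : V -> R) (p : V) : 'M[R]_4 := invmx (gmat A B C p).

Definition Gamma (A B C : V -> R) (k i j : 'I_4) : V -> R := fun p =>
  2^-1 * \sum_(l < 4) ginv A B C p k l *
     (pd i (gfun A B C j l) p + pd j (gfun A B C i l) p
      - pd l (gfun A B C i j) p).

(* affinor q with components q_i^j (row i, column j): q_i^j = 1 iff
   j = i+1 mod 4; it acts on components by (qx)^j = x^i q_i^j *)
Definition qmat : 'M[R]_4 :=
  \matrix_(i < 4, j < 4) (((val j == (val i + 1) %% 4)%N)%:R : R).

Definition qv (x : V) : V := x *m qmat.

(* nabla q = 0 at p: (nabla_i q)_k^j = sum_m (q_k^m Gamma^j_im - Gamma^m_ik q_m^j)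
   (q has constant components) *)
Definition q_parallel_at (A B C : V -> R) (p : V) : Prop :=
  forall i k j : 'I_4,
    \sum_(m < 4) (qmat k m * Gamma A B C j i m p
                  - Gamma A B C m i k p * qmat m j) = 0.

(* Riemann tensor components R^l_ijk: R(d_i,d_j)d_k = R^l_ijk d_l, for
   R(x,y)z = nabla_x nabla_y z - nabla_y nabla_x z - nabla_[x,y] z *)
Definition Riem (A B C : V -> R) (l i j k : 'I_4) (p : V) : R :=
  pd i (Gamma A B C l j k) p - pd j (Gamma A B C l i k) p
  + \sum_(m < 4) (Gamma A B C m j k p * Gamma A B C l i m p
                  - Gamma A B C m i k p * Gamma A B C l j m p).

Definition gval (A B C : V -> R) (p x y : V) : R :=
  \sum_(i < 4) \sum_(j < 4) gmat A B C p i j * x 0 i * y 0 j.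

(* R(x,y,z,u) = g(R(x,y)z,u) *)
Definition R4 (A B C : V -> R) (p x y z u : V) : R :=
  \sum_(i < 4) \sum_(j < 4) \sum_(k < 4) \sum_(l < 4) \sum_(s < 4)
    x 0 i * y 0 j * z 0 k * u 0 s * Riem A B C l i j k p * gmat A B C p l s.

Definition sec (A B C : V -> R) (p x y : V) : R :=
  R4 A B C p x y x y /
  (gval A B C p x x * gval A B C p y y - gval A B C p x y ^+ 2).

End Geom.

From HB Require Import structures.
From mathcomp Require Import all_boot all_order all_algebra.
From mathcomp Require Import all_classical all_reals all_analysis.
From mathcomp Require Import ring lra.
Import Order.TTheory GRing.Theory Num.Theory.
Import numFieldNormedType.Exports.
Local Open Scope classical_set_scope.
Local Open Scope ring_scope.

(* Since q is parallel, the Christoffel symbols satisfy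
   Gamma^j_{i,k+1} = Gamma^{j-1}_{ik} (indices mod 4), so the covariant curvature
   tensor R_ijks is invariant under a simultaneous cyclic shift of k and s.
   R_ijks is skew in (i, j) and, by metric compatibility and the symmetry of
   second partial derivatives, in (k, s); with the first Bianchi identity this
   gives pair symmetry, hence R(qx, qy, qz, qu) = R(x, y, z, u). As g is
   q-invariant as well, q maps E_3 onto E_1, and q, q^2 map E_1 onto E_4, E_6,
   so these planes have the same curvature. Finally q^4 = 1 gives
   R(y, z, x, q^2 x) = R(y, z, q^2 x, x) = - R(y, z, x, q^2 x), so E_2 and E_5
   are flat. *)

Section MixedDerivatives.
Variables (R : realType) (V : normedModType R).

Lemma is_derive_line (f : V -> R) (c u : V) (t : R) :
  derivable f (t *: u + c) u ->
  is_derive t 1 (fun s : R => f (s *: u + c)) ('D_u f (t *: u + c)).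
Proof.
move=> df.
have E : (fun h : R => h^-1 *: (((fun s => f (s *: u + c)) \o shift t) (h *: 1)
           - f (t *: u + c)))
       = (fun h : R =>
            h^-1 *: ((f \o shift (t *: u + c)) (h *: u) - f (t *: u + c))).
  by apply: funext => h /=; rewrite scalerDl /GRing.scale /= mulr1 addrA.
by split; [rewrite /derivable E | rewrite /derive E].
Qed.

(* Two applications of the mean value theorem to the second difference. *)
Lemma second_difference_mvt (f : V -> R) (u w p : V) (h : R) (Q : set V) :
  0 < h ->
  (forall s t, 0 <= s <= h -> 0 <= t <= h -> Q (s *: u + (t *: w + p))) ->
  (forall y, Q y -> derivable f y u /\ derivable ('D_u f) y w) ->
  exists s t, [/\ 0 <= s <= h, 0 <= t <= h &
    f (h *: u + (h *: w + p)) - f (h *: u + p) - f (h *: w + p) + f p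
     = 'D_w ('D_u f) (s *: u + (t *: w + p)) * h * h].
Proof.
move=> h0 HQ dQ.
have hh : 0 <= h <= h by rewrite lexx ltW.
have h0' : 0 <= (0 : R) <= h by rewrite lexx ltW.
have icc x : x \in `[0, h] -> 0 <= x <= h by rewrite in_itv.
have ioo x : x \in `]0, h[ -> 0 <= x <= h.
  by rewrite in_itv /= => /andP[a b]; rewrite !ltW.
have Q0 r : 0 <= r <= h -> Q (r *: u + p).
  by move=> rh; have := HQ r 0 rh h0'; rewrite scale0r add0r.
pose phi r := f (r *: u + (h *: w + p)) - f (r *: u + p).
have dphi r : 0 <= r <= h -> is_derive r 1 phi
     ('D_u f (r *: u + (h *: w + p)) - 'D_u f (r *: u + p)).
  move=> rh; apply: is_deriveB; apply: is_derive_line.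
    exact: (dQ _ (HQ r h rh hh)).1.
  exact: (dQ _ (Q0 r rh)).1.
have [xi xih Exi] := MVT h0 (fun x xh => dphi x (ioo x xh))
  (derivable_within_continuous
     (fun x xh => @ex_derive _ _ _ _ _ _ _ (dphi x (icc x xh)))).
pose psi r := 'D_u f (r *: w + (xi *: u + p)).
have dpsi r : 0 <= r <= h -> is_derive r 1 psi
    ('D_w ('D_u f) (r *: w + (xi *: u + p))).
  move=> rh; apply: is_derive_line.
  by have := (dQ _ (HQ xi r (ioo xi xih) rh)).2; rewrite addrCA.
have [eta etah Eeta] := MVT h0 (fun x xh => dpsi x (ioo x xh))
  (derivable_within_continuous
     (fun x xh => @ex_derive _ _ _ _ _ _ _ (dpsi x (icc x xh)))).
exists xi, eta; split; [exact: ioo | exact: ioo |].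
move: Exi Eeta; rewrite /phi /psi !scale0r !add0r !subr0 => Exi.
rewrite [h *: w + (xi *: u + p)]addrCA [eta *: w + _]addrCA => Eeta.
have -> : forall a b c d : R, a - b - c + d = (a - b) - (c - d) by move=> *; ring.
by rewrite Exi Eeta.
Qed.

Lemma rectangle_in_ball (u w : V) (d : R) : 0 < d ->
  exists2 h, 0 < h & forall s t, 0 <= s <= h -> 0 <= t <= h ->
    `|s *: u + t *: w| < d.
Proof.
move=> d0; have c0 : 0 < `|u| + `|w| + 1 by rewrite ltr_wpDl // addr_ge0.
pose h := d / (2 * (`|u| + `|w| + 1)).
have h0 : 0 < h by rewrite divr_gt0 // mulr_gt0.
exists h => // s t /andP[s0 sh] /andP[t0 th].
apply: (le_lt_trans (ler_normD _ _)); rewrite !normrZ !ger0_norm //.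
apply: (@le_lt_trans _ _ (h * (`|u| + `|w|))).
  by rewrite mulrDr; apply: lerD; apply: ler_wpM2r.
apply: (@le_lt_trans _ _ (h * (`|u| + `|w| + 1))).
  by rewrite ler_pM2l // lerDl.
rewrite /h -mulrA gtr_pMr // invfM -mulrA mulVf ?gt_eqF // mulr1.
by rewrite invf_lt1 // ltr1n.
Qed.

Lemma derive_comm (f : V -> R) (u w p : V) (N : set V) :
  nbhs p N ->
  (forall y, N y -> [/\ derivable f y u, derivable f y w,
        derivable ('D_u f) y w & derivable ('D_w f) y u]) ->
  {for p, continuous ('D_w ('D_u f))} ->
  {for p, continuous ('D_u ('D_w f))} ->
  'D_w ('D_u f) p = 'D_u ('D_w f) p.
Proof.
move=> Np dN ca cb.
set Fa := 'D_w ('D_u f) in ca *; set Fb := 'D_u ('D_w f) in cb *.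
apply/eqP; rewrite -subr_eq0 -normr_le0.
apply/ler_addgt0Pr => z z0; rewrite add0r.
have e0 : 0 < z / 2 by rewrite divr_gt0.
set e := z / 2 in e0.
have Ha : \forall y \near p, `|Fa p - Fa y| < e.
  by move: ca => /cvgrPdist_lt /(_ e e0).
have Hb : \forall y \near p, `|Fb p - Fb y| < e.
  by move: cb => /cvgrPdist_lt /(_ e e0).
have /nbhs_normP[d d0 Hd] : \forall y \near p,
    [/\ N y, `|Fa p - Fa y| < e & `|Fb p - Fb y| < e].
  by near=> y; split; [exact: (near Np) | exact: (near Ha) | exact: (near Hb)].
have [h h0 hd] := @rectangle_in_ball u w d d0.
have near_p s t : 0 <= s <= h -> 0 <= t <= h ->
    [/\ N (s *: u + (t *: w + p)), `|Fa p - Fa (s *: u + (t *: w + p))| < e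
      & `|Fb p - Fb (s *: u + (t *: w + p))| < e].
  move=> sh th; apply: Hd => /=.
  by rewrite addrA opprD addrCA subrr addr0 normrN hd.
have inN s t (sh : 0 <= s <= h) (th : 0 <= t <= h) : N (s *: u + (t *: w + p)).
  by case: (near_p s t sh th).
have [s1 [t1 [s1h t1h E1]]] := @second_difference_mvt f u w p h N h0 inN
  (fun y Ny => let: And4 a _ c _ := dN y Ny in conj a c).
have [s2 [t2 [s2h t2h E2]]] := @second_difference_mvt f w u p h N h0
  (fun s t sh th => ltac:(rewrite addrCA; exact: inN t s th sh))
  (fun y Ny => let: And4 _ b _ d := dN y Ny in conj b d).
have {E1 E2} E : Fa (s1 *: u + (t1 *: w + p)) = Fb (t2 *: u + (s2 *: w + p)).
  move: E2; rewrite [h *: w + (h *: u + p)]addrCA [s2 *: w + _]addrCA.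
  have -> : forall a1 a2 a3 a4 : R, a1 - a2 - a3 + a4 = a1 - a3 - a2 + a4.
    by move=> *; ring.
  by rewrite E1 => /(mulIf (lt0r_neq0 h0))/(mulIf (lt0r_neq0 h0)).
have [_ Ha' _] := near_p s1 t1 s1h t1h.
have [_ _ Hb'] := near_p t2 s2 t2h s2h.
rewrite -E distrC in Hb'.
have -> : z = e + e by rewrite /e -splitr.
exact: le_trans (ler_distD _ _ _) (ltW (ltrD Ha' Hb')).
Unshelve. all: by end_near.
Qed.

End MixedDerivatives.

Definition form4 {R : pzRingType} {n : nat}
    (S : 'I_n -> 'I_n -> 'I_n -> 'I_n -> R) (x y z u : 'rV[R]_n) : R :=
  \sum_(i < n) \sum_(j < n) \sum_(k < n) \sum_(s < n)
     x 0 i * y 0 j * z 0 k * u 0 s * S i j k s.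

Section AlgebraicCurvatureTensor.
Variables (R : realFieldType) (n : nat) (S : 'I_n -> 'I_n -> 'I_n -> 'I_n -> R).
Hypothesis S_antisym12 : forall i j k s, S j i k s = - S i j k s.
Hypothesis S_antisym34 : forall i j k s, S i j s k = - S i j k s.
Hypothesis S_bianchi : forall i j k s, S i j k s + S j k i s + S k i j s = 0.

(* Add the Bianchi identities for (i,j,k,s) and (k,s,i,j), subtract those for
   (j,k,s,i) and (s,i,j,k); after normalising the pairs, 2 S_ijks = 2 S_ksij. *)
Lemma curv_pair_sym i j k s : S k s i j = S i j k s.
Proof.
have B1 := S_bianchi i j k s; have B2 := S_bianchi j k s i.
have B3 := S_bianchi k s i j; have B4 := S_bianchi s i j k.
have := S_antisym12 i k j s; have := S_antisym34 j k i s.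
have := S_antisym34 k s i j; have := S_antisym12 j s k i.
have := S_antisym34 j s i k; have := S_antisym12 i s k j.
have := S_antisym34 i s j k; have := S_antisym34 i k j s.
have := S_antisym12 i s j k; have := S_antisym34 i j k s.
move=> *; lra.
Qed.

Lemma form4_antisym12 x y z u : form4 S y x z u = - form4 S x y z u.
Proof.
rewrite /form4 exchange_big -sumrN; apply: eq_bigr => i _.
rewrite -sumrN; apply: eq_bigr => j _; rewrite -sumrN; apply: eq_bigr => k _.
rewrite -sumrN; apply: eq_bigr => s _.
by rewrite S_antisym12; ring.
Qed.

Lemma form4_antisym34 x y z u : form4 S x y u z = - form4 S x y z u.
Proof.
rewrite /form4 -sumrN; apply: eq_bigr => i _.
rewrite -sumrN; apply: eq_bigr => j _.
rewrite exchange_big -sumrN; apply: eq_bigr => k _.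
rewrite -sumrN; apply: eq_bigr => s _.
by rewrite S_antisym34; ring.
Qed.

Lemma form4_pair_sym x y z u : form4 S z u x y = form4 S x y z u.
Proof.
rewrite /form4.
under eq_bigr do rewrite exchange_big /=.
under eq_bigr do under eq_bigr do rewrite exchange_big /=.
rewrite exchange_big /=.
under eq_bigr do rewrite exchange_big /=.
do 4!(apply: eq_bigr => ? _).
by rewrite curv_pair_sym; ring.
Qed.

End AlgebraicCurvatureTensor.

Lemma ord4_ind (P : 'I_4 -> Prop) :
  P (@Ordinal 4 0 isT) -> P (@Ordinal 4 1 isT) -> P (@Ordinal 4 2 isT) ->
  P (@Ordinal 4 3 isT) -> forall i, P i.
Proof.
by move=> P0 P1 P2 P3 [[|[|[|[|i]]]] Hi] //; rewrite (bool_irrelevance Hi isT).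
Qed.

Lemma sum4 (R : nmodType) (F : 'I_4 -> R) : \sum_(i < 4) F i =
  F (@Ordinal 4 0 isT) + F (@Ordinal 4 1 isT) + F (@Ordinal 4 2 isT)
  + F (@Ordinal 4 3 isT).
Proof.
rewrite !big_ord_recl big_ord0 addr0 !addrA.
by congr (F _ + F _ + F _ + F _); apply: val_inj.
Qed.

Section CyclicShift.
Variable R : realType.
Local Notation V := 'rV[R]_4.

Lemma qmatE (k m : 'I_4) : qmat R k m = (m == ordS k)%:R.
Proof. by rewrite mxE -val_eqE /= addn1. Qed.

Lemma sum_qmatl (F : 'I_4 -> R) k : \sum_(m < 4) qmat R k m * F m = F (ordS k).
Proof.
rewrite (bigD1 (ordS k)) //= qmatE eqxx mul1r big1 ?addr0 // => m /negbTE mk.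
by rewrite qmatE mk mul0r.
Qed.

Lemma sum_qmatr (F : 'I_4 -> R) j :
  \sum_(m < 4) F m * qmat R m j = F (ord_pred j).
Proof.
rewrite (bigD1 (ord_pred j)) //= qmatE ord_predK eqxx mulr1 big1 ?addr0 //.
move=> m mj.
rewrite qmatE; case: eqP => [E|]; last by rewrite mulr0.
by move: mj; rewrite E ordSK eqxx.
Qed.

Lemma qvE (x : V) j : qv x 0 j = x 0 (ord_pred j).
Proof. by rewrite /qv mxE sum_qmatr. Qed.

Lemma qv4_id (x : V) : qv (qv (qv (qv x))) = x.
Proof.
apply/matrixP => i j; rewrite (ord1 i) !qvE.
by elim/ord4_ind: j; congr (x 0 _); apply: val_inj.
Qed.

Section InvariantForm.
Variable S : 'I_4 -> 'I_4 -> 'I_4 -> 'I_4 -> R.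
Hypothesis S_antisym12 : forall i j k s, S j i k s = - S i j k s.
Hypothesis S_antisym34 : forall i j k s, S i j s k = - S i j k s.
Hypothesis S_bianchi : forall i j k s, S i j k s + S j k i s + S k i j s = 0.
Hypothesis S_ordS34 : forall i j k s, S i j (ordS k) (ordS s) = S i j k s.

Lemma form4_qv34 x y z u : form4 S x y (qv z) (qv u) = form4 S x y z u.
Proof.
rewrite /form4; apply: eq_bigr => i _; apply: eq_bigr => j _.
rewrite (reindex_inj (@ordS_inj 4)); apply: eq_bigr => k _.
rewrite (reindex_inj (@ordS_inj 4)); apply: eq_bigr => s _.
by rewrite !qvE !ordSK S_ordS34.
Qed.

(* Pair symmetry transports the invariance from the last pair to the first. *)
Lemma form4_qv x y z u : form4 S (qv x) (qv y) (qv z) (qv u) = form4 S x y z u.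
Proof.
by rewrite form4_qv34 form4_pair_sym // form4_qv34 form4_pair_sym.
Qed.

Lemma form4_qv2_eq0 x y z : form4 S x y z (qv (qv z)) = 0.
Proof.
have E : form4 S x y (qv (qv z)) z = form4 S x y z (qv (qv z)).
  by rewrite -{2}(qv4_id z) !form4_qv34.
apply/eqP; rewrite -[_ == 0](mulrn_eq0 _ 2) mulr2n -{1}E form4_antisym34 //.
by rewrite addNr.
Qed.

End InvariantForm.
End CyclicShift.

Section CirculantMetric.
Variables (R : realType) (A B C : 'rV[R]_4 -> R).
Local Notation V := 'rV[R]_4.

Lemma gmat_sym p k l : gmat A B C p k l = gmat A B C p l k.
Proof. by rewrite !mxE; elim/ord4_ind: k; elim/ord4_ind: l. Qed.

Lemma gmat_ordS p k l : gmat A B C p (ordS k) (ordS l) = gmat A B C p k l.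
Proof. by rewrite !mxE; elim/ord4_ind: k; elim/ord4_ind: l. Qed.

Lemma gval_sym p x y : gval A B C p x y = gval A B C p y x.
Proof.
rewrite /gval exchange_big /=; apply: eq_bigr => i _; apply: eq_bigr => j _.
by rewrite gmat_sym; ring.
Qed.

Lemma gval_qv p x y : gval A B C p (qv x) (qv y) = gval A B C p x y.
Proof.
rewrite /gval (reindex_inj (@ordS_inj 4)); apply: eq_bigr => i _.
rewrite (reindex_inj (@ordS_inj 4)); apply: eq_bigr => j _.
by rewrite !qvE !ordSK gmat_ordS.
Qed.

Variables (p : V) (S : 'I_4 -> 'I_4 -> 'I_4 -> 'I_4 -> R).
Hypothesis S_antisym12 : forall i j k s, S j i k s = - S i j k s.
Hypothesis S_antisym34 : forall i j k s, S i j s k = - S i j k s.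
Hypothesis S_bianchi : forall i j k s, S i j k s + S j k i s + S k i j s = 0.
Hypothesis S_ordS34 : forall i j k s, S i j (ordS k) (ordS s) = S i j k s.
Hypothesis R4_form4 : forall x y z u, R4 A B C p x y z u = form4 S x y z u.

Lemma sec_sym x y : sec A B C p y x = sec A B C p x y.
Proof.
rewrite /sec !R4_form4 form4_antisym12 // form4_antisym34 // opprK.
by rewrite [gval _ _ _ _ y y * _]mulrC (gval_sym p y x).
Qed.

Lemma sec_qv x y : sec A B C p (qv x) (qv y) = sec A B C p x y.
Proof. by rewrite /sec !R4_form4 form4_qv // !gval_qv. Qed.

Lemma sec_qv2_eq0 x : sec A B C p x (qv (qv x)) = 0.
Proof. by rewrite /sec R4_form4 form4_qv2_eq0 // mul0r. Qed.

Lemma sec_qv_planes x :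
  let q1 := qv x in let q2 := qv q1 in let q3 := qv q2 in
  let mu := sec A B C p in
  mu x q1 = mu q3 x /\ mu x q1 = mu q2 q1 /\ mu x q1 = mu q2 q3 /\
  mu x q2 = 0 /\ mu q3 q1 = 0.
Proof.
move=> q1 q2 q3 mu; have q4 : qv q3 = x by rewrite qv4_id.
split; [|split; [|split; [|split]]].
- by rewrite /mu -[RHS]sec_qv q4.
- by rewrite /mu [RHS]sec_sym /q2 sec_qv.
- by rewrite /mu /q3 /q2 !sec_qv.
- exact: sec_qv2_eq0.
- by rewrite /mu /q1 -q4 sec_qv2_eq0.
Qed.

End CirculantMetric.

(* Pointwise forms of the library's lemmas on [f * g], [f + g], ..., which
   unification does not find when the function is written as a lambda. *)
Section PointwiseDerivatives.
Variables (R : realType) (V : normedModType R) (x v : V).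
Implicit Types f g : V -> R.

Lemma derivable_fM f g : derivable f x v -> derivable g x v ->
  derivable (fun y => f y * g y) x v.
Proof. by move=> df dg; have := derivableM df dg. Qed.

Lemma derivable_fD f g : derivable f x v -> derivable g x v ->
  derivable (fun y => f y + g y) x v.
Proof. by move=> df dg; have := derivableD df dg. Qed.

Lemma derivable_fB f g : derivable f x v -> derivable g x v ->
  derivable (fun y => f y - g y) x v.
Proof. by move=> df dg; have := derivableB df dg. Qed.

Lemma derivable_fV f : f x != 0 -> derivable f x v ->
  derivable (fun y => (f y)^-1) x v.
Proof. exact: derivableV. Qed.

Lemma derivable_fsum n (F : 'I_n -> V -> R) : (forall i, derivable (F i) x v) ->
  derivable (fun y => \sum_(i < n) F i y) x v.
Proof.
move=> dF; have := derivable_sum dF.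
by rewrite (_ : \sum_(i < n) F i = (fun y => \sum_(i < n) F i y)) // fct_sumE.
Qed.

Lemma derive_fM f g : derivable f x v -> derivable g x v ->
  'D_v (fun y => f y * g y) x = 'D_v f x * g x + f x * 'D_v g x.
Proof.
move=> df dg; have := deriveM df dg.
rewrite (_ : f * g = (fun y => f y * g y)) // => ->.
by rewrite /GRing.scale /= addrC mulrC.
Qed.

Lemma derive_fD f g : derivable f x v -> derivable g x v ->
  'D_v (fun y => f y + g y) x = 'D_v f x + 'D_v g x.
Proof. by move=> df dg; have := deriveD df dg. Qed.

Lemma derive_fsum n (F : 'I_n -> V -> R) : (forall i, derivable (F i) x v) ->
  'D_v (fun y => \sum_(i < n) F i y) x = \sum_(i < n) 'D_v (F i) x.
Proof.
move=> dF; have := derive_sum dF.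
by rewrite (_ : \sum_(i < n) F i = (fun y => \sum_(i < n) F i y)) // fct_sumE.
Qed.

End PointwiseDerivatives.
Arguments derivable_fM {R V x v f g}. Arguments derivable_fD {R V x v f g}.
Arguments derivable_fB {R V x v f g}. Arguments derivable_fV {R V x v f}.
Arguments derivable_fsum {R V x v n F}. Arguments derive_fM {R V x v f g}.
Arguments derive_fD {R V x v f g}. Arguments derive_fsum {R V x v n F}.

Lemma mulmx1_contract {R : comRingType} {n} {g M : 'M[R]_n} (h : 'I_n -> R) c l :
  g *m M = 1%:M -> (forall a b, g a b = g b a) ->
  \sum_(m < n) (c * \sum_(k < n) M m k * h k) * g m l = c * h l.
Proof.
move=> gM gs.
transitivity (\sum_(k < n) c * h k * (g *m M) l k).
  under eq_bigr do rewrite mulr_sumr mulr_suml.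
  rewrite exchange_big; apply: eq_bigr => k _; rewrite mxE mulr_sumr.
  by apply: eq_bigr => m _; rewrite gs; ring.
rewrite gM (bigD1 l) //= mxE eqxx mulr1 big1 ?addr0 // => k kl.
by rewrite mxE eq_sym (negbTE kl) mulr0.
Qed.

(* The circulant matrix g has eigenvalues A + 2B + C, A - 2B + C and A - C
   (twice); its inverse is the circulant built from the entries below. *)
Section InverseMetric.
Variables (R : realType) (A B C : 'rV[R]_4 -> R).

Definition geig0 y := A y + 2 * B y + C y.
Definition geig1 y := A y - C y.
Definition geig2 y := A y - 2 * B y + C y.
Definition ginvA y := ((geig0 y)^-1 + (geig2 y)^-1 + 2 * (geig1 y)^-1) / 4.
Definition ginvB y := ((geig0 y)^-1 - (geig2 y)^-1) / 4.
Definition ginvC y := ((geig0 y)^-1 + (geig2 y)^-1 - 2 * (geig1 y)^-1) / 4.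

Variable y : 'rV[R]_4.
Hypothesis pos : 0 < B y /\ B y < C y /\ C y < A y.

Lemma geig_neq0 : [/\ geig0 y != 0, geig1 y != 0 & geig2 y != 0].
Proof.
by case: pos => *; rewrite /geig0 /geig1 /geig2; split; apply/lt0r_neq0; lra.
Qed.

Lemma mulmx_gmat_inv : gmat A B C y *m gmat ginvA ginvB ginvC y = 1%:M.
Proof.
have [n0 n1 n2] := geig_neq0; move: n0 n1 n2.
rewrite /ginvA /ginvB /ginvC /geig0 /geig1 /geig2 => n0 n1 n2.
apply/matrixP => i j; rewrite !mxE sum4 !mxE /=.
by elim/ord4_ind: i; elim/ord4_ind: j => /=; field; rewrite ?n0 ?n1 ?n2.
Qed.

Lemma ginvE : ginv A B C y = gmat ginvA ginvB ginvC y.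
Proof.
have [gU _] := mulmx1_unit mulmx_gmat_inv.
by rewrite /ginv -[RHS]mul1mx -(mulVmx gU) -mulmxA mulmx_gmat_inv mulmx1.
Qed.

Lemma mulmx_ginv : gmat A B C y *m ginv A B C y = 1%:M.
Proof. by rewrite ginvE mulmx_gmat_inv. Qed.

End InverseMetric.
Arguments geig0 {R}. Arguments geig1 {R}. Arguments geig2 {R}.
Arguments ginvA {R}. Arguments ginvB {R}. Arguments ginvC {R}.
Arguments geig_neq0 {R A B C y}. Arguments ginvE {R A B C y}.
Arguments mulmx_ginv {R A B C y}.

(* Matrix form of R_ijks + R_ijsk = 0: with d_i g expressed through metric
   compatibility, the left-hand side is d_i d_j g - d_j d_i g. *)
Lemma curvature_lowered_skew {R : comRingType}
    {g Gi Gj dGij dGji dgi dgj ddgij ddgji : 'M[R]_4} :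
  g^T = g -> dgi = Gi *m g + g *m Gi^T -> dgj = Gj *m g + g *m Gj^T ->
  ddgij = dGij *m g + Gj *m dgi + g *m dGij^T + dgi *m Gj^T ->
  ddgji = dGji *m g + Gi *m dgj + g *m dGji^T + dgj *m Gi^T ->
  ddgij = ddgji ->
  let S := (dGij - dGji + Gj *m Gi - Gi *m Gj) *m g in S + S^T = 0.
Proof.
move=> gT Ei Ej Eij Eji Ed S.
suff -> : S + S^T = ddgij - ddgji by rewrite Ed subrr.
rewrite Eij Eji Ei Ej /S trmx_mul gT.
by apply/matrixP => k l; rewrite !mxE !sum4 !mxE !sum4 !mxE /=; ring.
Qed.

Lemma christoffel_bianchi {R : comRingType}
    (dG : 'I_4 -> 'I_4 -> 'I_4 -> 'I_4 -> R) (G : 'I_4 -> 'I_4 -> 'I_4 -> R) :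
  (forall l a b, G l a b = G l b a) ->
  (forall c l a b, dG c l a b = dG c l b a) ->
  let Rm l i j k := dG i l j k - dG j l i k +
     \sum_(m < 4) (G m j k * G l i m - G m i k * G l j m) in
  forall l i j k, Rm l i j k + Rm l j k i + Rm l k i j = 0.
Proof.
move=> Gs dGs Rm l i j k; rewrite /Rm !sum4.
rewrite (dGs j l k i) (dGs k l j i) (dGs i l k j).
by rewrite !(Gs _ k i) !(Gs _ j i) !(Gs _ k j); ring.
Qed.

Lemma gfun_cases {R : realType} (A B C : 'rV[R]_4 -> R) k l :
  [\/ gfun A B C k l = A, gfun A B C k l = B | gfun A B C k l = C].
Proof.
rewrite /gfun; case E0: ((val l + 4 - val k) %% 4 == 0)%N.
  by apply: Or31; apply: funext => y; rewrite mxE /= E0.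
case E2: ((val l + 4 - val k) %% 4 == 2)%N.
  by apply: Or33; apply: funext => y; rewrite mxE /= E0 E2.
by apply: Or32; apply: funext => y; rewrite mxE /= E0 E2.
Qed.

Section LeviCivita.
Variables (R : realType) (U : set 'rV[R]_4) (A B C : 'rV[R]_4 -> R).
Local Notation V := 'rV[R]_4.
Local Notation e := (ebasis R).
Local Notation g := (gmat A B C).
Local Notation G := (Gamma A B C).
Hypotheses (oU : open U) (sA : smooth_on U A) (sB : smooth_on U B)
  (sC : smooth_on U C).
Hypothesis pos : forall y, U y -> 0 < B y /\ B y < C y /\ C y < A y.

Lemma nbhs_U {y} : U y -> nbhs y U.
Proof. by move=> Uy; apply: open_nbhs_nbhs. Qed.

Lemma derivable_smooth {f : V -> R} s {y} a : smooth_on U f -> U y ->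
  derivable (ipd s f) y (e a).
Proof. by move=> sf Uy; exact: ((sf s y Uy).2 a). Qed.

Lemma smooth_gfun k l : smooth_on U (gfun A B C k l).
Proof. by case: (gfun_cases A B C k l) => ->. Qed.

Lemma gfun_sym k l : gfun A B C k l = gfun A B C l k.
Proof. by apply: funext => y; rewrite /gfun gmat_sym. Qed.

Lemma derivable_ginv {y} a : U y -> [/\ derivable (ginvA A B C) y (e a),
  derivable (ginvB A B C) y (e a) & derivable (ginvC A B C) y (e a)].
Proof.
move=> Uy; have [n0 n1 n2] := geig_neq0 (pos _ Uy).
have dA := derivable_smooth [::] a sA Uy.
have dB := derivable_smooth [::] a sB Uy.
have dC := derivable_smooth [::] a sC Uy.
have c2 := @derivable_cst _ _ _ (2 : R) y (e a).
have c4 := @derivable_cst _ _ _ (4^-1 : R) y (e a).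
have c2B := derivable_fM c2 dB.
have i0 := derivable_fV n0 (derivable_fD (derivable_fD dA c2B) dC).
have i1 := derivable_fV n1 (derivable_fB dA dC).
have i2 := derivable_fV n2 (derivable_fD (derivable_fB dA c2B) dC).
split; apply: derivable_fM c4.
- exact: derivable_fD (derivable_fD i0 i2) (derivable_fM c2 i1).
- exact: derivable_fB i0 i2.
- exact: derivable_fB (derivable_fD i0 i2) (derivable_fM c2 i1).
Qed.

Lemma derivable_Gamma l i j {y} a : U y -> derivable (G l i j) y (e a).
Proof.
move=> Uy.
pose h n z := pd i (gfun A B C j n) z + pd j (gfun A B C i n) z
  - pd n (gfun A B C i j) z.
have GE : \forall z \near y, 2^-1 * \sum_(n < 4)
    gfun (ginvA A B C) (ginvB A B C) (ginvC A B C) l n z * h n z = G l i j z.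
  move: (nbhs_U Uy); apply: filterS => z Uz.
  by rewrite /Gamma ginvE //; apply: pos.
apply: near_eq_derivable GE _.
have [da db dc] := derivable_ginv a Uy.
have dgi n :
    derivable (gfun (ginvA A B C) (ginvB A B C) (ginvC A B C) l n) y (e a).
  by case: (gfun_cases (ginvA A B C) (ginvB A B C) (ginvC A B C) l n) => ->.
have dh n : derivable (h n) y (e a).
  have dpd k l' b := derivable_smooth [:: b] a (smooth_gfun k l') Uy.
  exact: derivable_fB (derivable_fD (dpd _ _ _) (dpd _ _ _)) (dpd _ _ _).
apply: derivable_fM; first exact: derivable_cst.
exact: derivable_fsum (fun n => derivable_fM (dgi n) (dh n)).
Qed.

Lemma Gamma_sym l i j : G l i j = G l j i.
Proof.
apply: funext => y; rewrite /Gamma; congr (_ * _); apply: eq_bigr => n _.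
by rewrite (gfun_sym j i); congr (_ * _); ring.
Qed.

(* Metric compatibility, obtained by contracting the defining formula of
   [Gamma] with g. *)
Lemma pd_gmat_Gamma y i k l : U y ->
  pd i (gfun A B C k l) y =
  \sum_(m < 4) (G m i k y * g y m l + G m i l y * g y k m).
Proof.
move=> Uy; have gU := mulmx_ginv (pos _ Uy).
have gs a b : g y a b = g y b a by apply: gmat_sym.
rewrite big_split /=.
under [X in _ = _ + X]eq_bigr do rewrite gs.
by rewrite /Gamma !(mulmx1_contract _ _ _ gU gs) (gfun_sym l k); field.
Qed.

Hypothesis qpar : forall y, U y -> q_parallel_at A B C y.

Lemma Gamma_ordS y i k j : U y -> G j i (ordS k) y = G (ord_pred j) i k y.
Proof.
move=> Uy; have := qpar y Uy i k j; rewrite sumrB sum_qmatl.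
rewrite (sum_qmatr _ (fun m => G m i k y)).
by move/eqP; rewrite subr_eq0 => /eqP.
Qed.

Variable p : V.
Hypothesis Up : U p.

Lemma pd_Gamma_ordS a i k j :
  pd a (G j i (ordS k)) p = pd a (G (ord_pred j) i k) p.
Proof.
apply: near_eq_derive; move: (nbhs_U Up); apply: filterS => z.
exact: Gamma_ordS.
Qed.

Lemma pd2_gmat_Gamma a i k l :
  pd a (pd i (gfun A B C k l)) p =
  \sum_(m < 4) (pd a (G m i k) p * g p m l + G m i k p * pd a (gfun A B C m l) p
     + (pd a (G m i l) p * g p k m + G m i l p * pd a (gfun A B C k m) p)).
Proof.
have N : \forall y \near p, pd i (gfun A B C k l) y =
    \sum_(m < 4) (G m i k y * g y m l + G m i l y * g y k m).
  by move: (nbhs_U Up); apply: filterS => z Uz; apply: pd_gmat_Gamma.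
have dG m i' k' := derivable_Gamma m i' k' a Up.
have dg m l' := derivable_smooth [::] a (smooth_gfun m l') Up.
rewrite /pd (near_eq_derive _ N).
rewrite (derive_fsum (fun m => derivable_fD (derivable_fM (dG m i k) (dg m l))
  (derivable_fM (dG m i l) (dg k m)))).
apply: eq_bigr => m _.
rewrite (derive_fD (derivable_fM (dG m i k) (dg m l))
  (derivable_fM (dG m i l) (dg k m))).
by rewrite (derive_fM (dG m i k) (dg m l)) (derive_fM (dG m i l) (dg k m)).
Qed.

Lemma pd_gmat_comm a i k l :
  pd a (pd i (gfun A B C k l)) p = pd i (pd a (gfun A B C k l)) p.
Proof.
have sg := smooth_gfun k l.
apply: (@derive_comm _ _ (gfun A B C k l) (e i) (e a) p U (nbhs_U Up)).
- move=> y Uy; split; [exact: ((sg [::] y Uy).2 i) | exact: ((sg [::] y Uy).2 a)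
    | exact: ((sg [:: i] y Uy).2 a) | exact: ((sg [:: a] y Uy).2 i)].
- exact: (sg [:: a; i] p Up).1.
- exact: (sg [:: i; a] p Up).1.
Qed.

Definition Gamma_mx i : 'M[R]_4 := \matrix_(k, m) G m i k p.
Definition dGamma_mx a i : 'M[R]_4 := \matrix_(k, m) pd a (G m i k) p.
Definition dgmat_mx a : 'M[R]_4 := \matrix_(k, l) pd a (gfun A B C k l) p.
Definition ddgmat_mx a i : 'M[R]_4 :=
  \matrix_(k, l) pd a (pd i (gfun A B C k l)) p.

Lemma gmat_tr : (g p)^T = g p.
Proof. by apply/matrixP => k l; rewrite [LHS]mxE gmat_sym. Qed.

Lemma dgmat_mxE i : dgmat_mx i = Gamma_mx i *m g p + g p *m (Gamma_mx i)^T.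
Proof.
apply/matrixP => k l; rewrite [LHS]mxE (pd_gmat_Gamma p i k l Up) big_split !mxE.
by congr (_ + _); apply: eq_bigr => m _; rewrite !mxE // mulrC.
Qed.

Lemma ddgmat_mxE a i :
  ddgmat_mx a i = dGamma_mx a i *m g p + Gamma_mx i *m dgmat_mx a
                  + g p *m (dGamma_mx a i)^T + dgmat_mx a *m (Gamma_mx i)^T.
Proof.
apply/matrixP => k l; rewrite [LHS]mxE pd2_gmat_Gamma !mxE -!big_split /=.
apply: eq_bigr => m _; rewrite !mxE !addrA.
by congr (_ + _ + _ + _); exact: mulrC.
Qed.

Definition Rcov (i j k s : 'I_4) : R :=
  \sum_(l < 4) Riem A B C l i j k p * g p l s.

Lemma Rcov_mxE i j : \matrix_(k, s) Rcov i j k s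
  = (dGamma_mx i j - dGamma_mx j i + Gamma_mx j *m Gamma_mx i
     - Gamma_mx i *m Gamma_mx j) *m g p.
Proof.
apply/matrixP => k s; rewrite !mxE; apply: eq_bigr => l _.
rewrite !mxE /Riem sumrB !addrA; congr ((_ + _ - _) * _).
all: by apply: eq_bigr => m _; rewrite !mxE.
Qed.

Lemma Rcov_antisym34 i j k s : Rcov i j s k = - Rcov i j k s.
Proof.
have Ed : ddgmat_mx i j = ddgmat_mx j i.
  by apply/matrixP => k' l'; rewrite [LHS]mxE [RHS]mxE; apply: pd_gmat_comm.
have := curvature_lowered_skew gmat_tr (dgmat_mxE i) (dgmat_mxE j)
  (ddgmat_mxE i j) (ddgmat_mxE j i) Ed.
rewrite /= -Rcov_mxE => /matrixP/(_ k s); rewrite !mxE => /eqP.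
by rewrite addrC addr_eq0 => /eqP.
Qed.

Lemma Riem_antisym l i j k : Riem A B C l j i k p = - Riem A B C l i j k p.
Proof.
rewrite /Riem opprD opprB -sumrN; congr (_ + _).
by apply: eq_bigr => m _; rewrite opprB.
Qed.

Lemma Rcov_antisym12 i j k s : Rcov j i k s = - Rcov i j k s.
Proof.
by rewrite /Rcov -sumrN; apply: eq_bigr => l _; rewrite Riem_antisym mulNr.
Qed.

Lemma Rcov_bianchi i j k s : Rcov i j k s + Rcov j k i s + Rcov k i j s = 0.
Proof.
rewrite /Rcov -!big_split /=; apply: big1 => l _; rewrite -!mulrDl.
have := @christoffel_bianchi _ (fun c l a b => pd c (G l a b) p)
  (fun l a b => G l a b p) _ _ l i j k.
by rewrite /Riem /= => ->; [rewrite mul0r | move=> *; rewrite Gamma_sym ..].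
Qed.

Lemma Riem_ordS l i j k :
  Riem A B C l i j (ordS k) p = Riem A B C (ord_pred l) i j k p.
Proof.
rewrite /Riem (pd_Gamma_ordS i j k l) (pd_Gamma_ordS j i k l); congr (_ + _).
rewrite (reindex_inj (@ordS_inj 4)); apply: eq_bigr => m _.
rewrite (Gamma_ordS p j k (ordS m) Up) (Gamma_ordS p i m l Up).
by rewrite (Gamma_ordS p i k (ordS m) Up) (Gamma_ordS p j m l Up) ordSK.
Qed.

Lemma Rcov_ordS34 i j k s : Rcov i j (ordS k) (ordS s) = Rcov i j k s.
Proof.
rewrite /Rcov (reindex_inj (@ordS_inj 4)); apply: eq_bigr => l _.
by rewrite Riem_ordS ordSK gmat_ordS.
Qed.

Lemma R4_form4 x y z u : R4 A B C p x y z u = form4 Rcov x y z u.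
Proof.
rewrite /R4 /form4; apply: eq_bigr => i _; apply: eq_bigr => j _.
apply: eq_bigr => k _; rewrite exchange_big; apply: eq_bigr => s _.
by rewrite /Rcov mulr_sumr; apply: eq_bigr => l _; rewrite !mulrA.
Qed.

End LeviCivita.

Theorem theorem3p1 (R : realType) (U : set 'rV[R]_4) (A B C : 'rV[R]_4 -> R) :
  open U ->
  smooth_on U A -> smooth_on U B -> smooth_on U C ->
  (forall p, U p -> 0 < B p /\ B p < C p /\ C p < A p) ->
  (forall p, U p -> q_parallel_at A B C p) ->
  forall (p x : 'rV[R]_4), U p ->
    ((x 0 0 - x 0 2) ^+ 2 + (x 0 1 - x 0 3) ^+ 2)
      * (x 0 0 - x 0 1 + x 0 2 - x 0 3) * (x 0 0 + x 0 1 + x 0 2 + x 0 3) != 0 ->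
    let q1 := qv x in
    let q2 := qv (qv x) in
    let q3 := qv (qv (qv x)) in
    let mu1 := sec A B C p x q1 in
    let mu2 := sec A B C p x q2 in
    let mu3 := sec A B C p q3 x in
    let mu4 := sec A B C p q2 q1 in
    let mu5 := sec A B C p q3 q1 in
    let mu6 := sec A B C p q2 q3 in
    mu1 = mu3 /\ mu1 = mu4 /\ mu1 = mu6 /\ mu2 = 0 /\ mu5 = 0.
Proof.
move=> oU sA sB sC pos qpar p x Up _.
exact: (@sec_qv_planes R A B C p _ (@Rcov_antisym12 R A B C p)
  (@Rcov_antisym34 R U A B C oU sA sB sC pos p Up) (@Rcov_bianchi R A B C p)
  (@Rcov_ordS34 R U A B C oU qpar p Up) (@R4_form4 R A B C p) x).
Qed.
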